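(* Let $G=(V,E,w)$ be an undirected graph with positive real edge weights, $s\in V$, $f\ge1$ an integer, and let $T$, $w'$, $H$ be as in the context. Let $F\subseteq E$ with $|F|\le f$, let $t\in V$ be reachable from $s$ in $G-F$, let $\pi$ be a shortest path from $s$ to $t$ in $G-F$ and $N$ the set of new edges of $\pi$. Let $M$ be a minimum spanning forest of $H-F$ with respect to $w'$, let $\pi'$ be the unique path from $s$ to $t$ in $M$, and let $N'$ be the set of new edges of $\pi'$. Then for every $e'\in N'$, $w'(e')\le \max_{e\in N} w'(e)$.
   Context: For a subgraph $X$ of $G$, $d_X(u,u')$ is the distance between $u,u'$ in $X$ with respect to $w$, and $d_X(u)=d_X(s,u)$. $T$ is a shortest-path tree of $G$ rooted at $s$. Define $w'(u,v)=0$ if $(u,v)\in E(T)$ and $w'(u,v)=d_T(u)+w(u,v)+d_T(v)$ otherwise; $G'=(V,E,w')$. Set $G_0=G'$; for $i=0,\dots,f$ let $M_i$ be the edge set of a minimum spanning forest of $G_i$ with respect to $w'$ and $G_{i+1}=G_i$ minus the edges of $M_i$. $H$ is the spanning subgraph of $G$ with edge set $\bigcup_{i=0}^f M_i$. $X-F$ denotes $X$ with the edges of $F$ removed. An edge is called new (with respect to $F$) if its endpoints lie in different connected components of the forest $T-F$. *)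

From HB Require Import structures.
From mathcomp Require Import all_boot all_order all_algebra.
From mathcomp Require Import boolp reals.
Set Implicit Arguments. Unset Strict Implicit. Unset Printing Implicit Defensive.
Import Order.TTheory GRing.Theory Num.Theory.
Local Open Scope ring_scope.

Section Graph.
Variables (V E : finType) (ends : E -> V * V).

Definition incident (e : E) (u : V) : bool := ((ends e).1 == u) || ((ends e).2 == u).
Definition other (e : E) (u : V) : V :=
  if (ends e).1 == u then (ends e).2 else (ends e).1.

Fixpoint walk (X : {set E}) (u v : V) (p : seq E) : bool :=
  match p with
  | [::] => u == v
  | e :: p' => [&& e \in X, incident e u & walk X (other e u) v p']
  end.

Fixpoint wverts (u : V) (p : seq E) : seq V :=
  match p with
  | [::] => [:: u]
  | e :: p' => u :: wverts (other e u) p'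
  end.

Definition gpath (X : {set E}) (u v : V) (p : seq E) : bool :=
  walk X u v p && uniq (wverts u p).

Definition reach (X : {set E}) (u v : V) : Prop := exists p, walk X u v p.

Definition acyclic (X : {set E}) : Prop :=
  (forall e, e \in X -> (ends e).1 != (ends e).2) /\
  (forall u v p q, gpath X u v p -> gpath X u v q -> p = q).

Definition spanning_forest (X M : {set E}) : Prop :=
  M \subset X /\ acyclic M /\ (forall u v, reach X u v -> reach M u v).

Variable R : realType.

Definition wsum (wt : E -> R) (M : {set E}) : R := \sum_(e in M) wt e.

Definition msf (wt : E -> R) (X M : {set E}) : Prop :=
  spanning_forest X M /\
  (forall M', spanning_forest X M' -> wsum wt M <= wsum wt M').

Definition wlen (w : E -> R) (p : seq E) : R := \sum_(e <- p) w e.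

Definition is_dist (w : E -> R) (X : {set E}) (u v : V) (d : R) : Prop :=
  (exists p, walk X u v p /\ wlen w p = d) /\
  (forall p, walk X u v p -> d <= wlen w p).

Definition sp_tree (w : E -> R) (s : V) (T : {set E}) : Prop :=
  acyclic T /\
  (forall e, e \in T -> reach T s (ends e).1 /\ reach T s (ends e).2) /\
  (forall u, reach setT s u -> reach T s u) /\
  (forall u d, reach T s u -> is_dist w setT s u d -> is_dist w T s u d).

Definition wmod (w : E -> R) (T : {set E}) (dT : V -> R) (e : E) : R :=
  if e \in T then 0 else dT (ends e).1 + w e + dT (ends e).2.

Fixpoint Gseq (Ms : nat -> {set E}) (i : nat) : {set E} :=
  match i with
  | 0 => setT
  | i'.+1 => Gseq Ms i' :\: Ms i'
  end.

Definition new_edge (T F : {set E}) (e : E) : Prop :=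
  ~ reach (T :\: F) (ends e).1 (ends e).2.

End Graph.

From Pilot Require Import Defs.
From HB Require Import structures.
From mathcomp Require Import all_boot all_order all_algebra.
From mathcomp Require Import boolp reals.
Set Implicit Arguments. Unset Strict Implicit. Unset Printing Implicit Defensive.
Import Order.TTheory GRing.Theory Num.Theory.
Local Open Scope ring_scope.

(* Let B be the largest w'-weight of a new edge of pi.  Every edge of pi is
   either new, hence of weight at most B, or joins two vertices connected in
   T - F by tree edges, of weight 0.  Moreover the endpoints of any edge
   e outside F are joined in H - F by edges of weight at most w'(e): if e is
   not in H, it lies in every G_i, so by the cycle property each M_i joins its
   endpoints by such edges; the M_i are pairwise disjoint, so one of these
   f + 1 paths avoids F.  Hence s and t are joined in H - F by edges of weight
   at most B, and by the cut property no edge of the path pi' in the minimum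
   spanning forest M of H - F is heavier.  The bound thus holds for every edge
   of pi', new or not, and no shortest-path property of pi or T is needed. *)

Section Connectivity.

Variables (V E : finType) (ends : E -> V * V).
Implicit Types (X Y Z M : {set E}) (e g h k : E) (u v x : V) (p q : seq E).

Local Notation incident := (incident ends).
Local Notation other := (other ends).
Local Notation walk := (walk ends).
Local Notation wverts := (wverts ends).
Local Notation gpath := (gpath ends).
Local Notation reach := (reach ends).
Local Notation acyclic := (acyclic ends).

Lemma incidentP h u :
  incident h u ->
  (u = (ends h).1 /\ other h u = (ends h).2) \/
  (u = (ends h).2 /\ other h u = (ends h).1).
Proof.
rewrite /Defs.incident /Defs.other; case: eqP => [->|_] /=; first by left.
by move/eqP=> ->; right.
Qed.

Lemma walk_cat X u v x p q :
  walk X u v p -> walk X v x q -> walk X u x (p ++ q).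
Proof.
elim: p u => [|h p IH] u /=; first by move/eqP->.
by case/and3P=> hX hu wp wq; rewrite hX hu IH.
Qed.

Lemma walk_edge_in X u v p : walk X u v p -> {subset p <= X}.
Proof.
elim: p u => [|k p IH] u //= /and3P[kX _ /IH sub] h.
by rewrite inE => /predU1P[-> //|]; apply: sub.
Qed.

Lemma walk_restrict X Y u v p : walk X u v p -> {subset p <= Y} -> walk Y u v p.
Proof.
elim: p u => [|k p IH] u //= /and3P[_ -> /IH wY] sub.
by rewrite sub ?mem_head //= wY // => h hp; apply/sub/mem_behead.
Qed.

Lemma walk_setD1 X g u v p : walk X u v p -> g \notin p -> walk (X :\ g) u v p.
Proof.
move=> wp gp; apply: (walk_restrict wp) => h hp.
by rewrite !inE (walk_edge_in wp hp) andbT; apply: contraNneq gp => <-.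
Qed.

Lemma sub_reach X Y u v : X \subset Y -> reach X u v -> reach Y u v.
Proof.
move=> sXY [p wp]; exists p; apply: (walk_restrict wp) => h /(walk_edge_in wp).
exact: (subsetP sXY).
Qed.

Lemma reach_refl X u : reach X u u.
Proof. by exists [::] => /=. Qed.

Lemma reach_trans X u v x : reach X u v -> reach X v x -> reach X u x.
Proof. by case=> p wp [q wq]; exists (p ++ q); apply: walk_cat wp wq. Qed.

Lemma reach_ends X h : h \in X -> reach X (ends h).1 (ends h).2.
Proof. by move=> hX; exists [:: h]; rewrite /= hX /Defs.incident /Defs.other !eqxx. Qed.

Lemma reach_ends_rev X h : h \in X -> reach X (ends h).2 (ends h).1.
Proof.
move=> hX; exists [:: h]; rewrite /= hX /Defs.incident /Defs.other eqxx orbT /=.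
by case: ifP => // /eqP ->.
Qed.

Lemma reach_sym X u v : reach X u v -> reach X v u.
Proof.
case=> p; elim: p u => [|h p IH] u /=; first by move/eqP->; apply: reach_refl.
case/and3P=> hX /incidentP hu /IH r; apply: reach_trans r _.
by case: hu => [[-> ->]|[-> ->]]; [apply: reach_ends_rev | apply: reach_ends].
Qed.

Lemma reach_other_ends X h u :
  incident h u -> reach X u (other h u) <-> reach X (ends h).1 (ends h).2.
Proof.
by case/incidentP=> [[-> ->]|[-> ->]]; split=> //; apply: reach_sym.
Qed.

Lemma reach_by_edges X Y u v p :
  walk X u v p -> (forall h, h \in p -> reach Y (ends h).1 (ends h).2) ->
  reach Y u v.
Proof.
elim: p u => [|h p IH] u /=; first by move=> /eqP-> _; apply: reach_refl.
case/and3P=> _ hu wp rY; apply: reach_trans (IH _ wp _) => [|k kp].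
  by apply/(reach_other_ends _ hu)/rY/mem_head.
by apply/rY/mem_behead.
Qed.

Lemma walk_crosses_cut X Y u v p :
  walk X u v p -> ~ reach Y u v ->
  exists2 g, g \in p & ~ reach Y (ends g).1 (ends g).2.
Proof.
move=> wp cut; apply: contrapT => crossing; apply/cut/(reach_by_edges wp) => g gp.
by apply: contrapT => ng; apply: crossing; exists g.
Qed.

Lemma reach_setD1_split Y g u v p :
  walk Y u v p ->
  reach (Y :\ g) u v \/
  ((reach (Y :\ g) u (ends g).1 \/ reach (Y :\ g) u (ends g).2) /\
   (reach (Y :\ g) (ends g).1 v \/ reach (Y :\ g) (ends g).2 v)).
Proof.
elim: p u => [|h p IH] u /=; first by move/eqP->; left; apply: reach_refl.
case/and3P=> hY hu /IH split.
have [hg|hg] := eqVneq h g.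
  subst h; right; split.
    by case/incidentP: hu => [[-> _]|[-> _]]; [left|right]; apply: reach_refl.
  case: split => [r|[_ //]].
  by case/incidentP: hu r => [[_ ->]|[_ ->]]; [right|left].
have r0 : reach (Y :\ g) u (other h u).
  by apply/(reach_other_ends _ hu)/reach_ends; rewrite !inE hg hY.
case: split => [r|[[r|r] r']]; [left|right|right].
- exact: reach_trans r0 r.
- by split=> //; left; apply: reach_trans r0 r.
- by split=> //; right; apply: reach_trans r0 r.
Qed.

Lemma reach_setU1_swap Z e h :
  reach (e |: Z) (ends h).1 (ends h).2 ->
  reach Z (ends h).1 (ends h).2 \/ reach (h |: Z) (ends e).1 (ends e).2.
Proof.
case=> p /(reach_setD1_split e).
have sZ : (e |: Z) :\ e \subset Z.
  by apply/subsetP=> k; rewrite !inE => /andP[/negbTE->].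
have sZh : Z \subset h |: Z by apply: subsetUr.
have rh : reach (h |: Z) (ends h).1 (ends h).2 by apply/reach_ends/setU11.
case=> [/(sub_reach sZ) r|[r1 r2]]; first by left.
case: r1 r2 => /(sub_reach sZ) r1 [] /(sub_reach sZ) r2;
  try by left; apply: reach_trans r1 r2.
all: right; move/(sub_reach sZh): r1 => r1; move/(sub_reach sZh): r2 => r2.
- exact: reach_trans (reach_sym r1) (reach_trans rh (reach_sym r2)).
- exact: reach_trans r2 (reach_trans (reach_sym rh) r1).
Qed.

Lemma mem_wverts_head u p : u \in wverts u p.
Proof. by case: p => [|h p] /=; rewrite inE eqxx. Qed.

Lemma mem_wverts_last X u v p : walk X u v p -> v \in wverts u p.
Proof.
elim: p u => [|h p IH] u /=; first by move/eqP->; rewrite inE.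
by case/and3P=> _ _ /IH; rewrite inE => ->; rewrite orbT.
Qed.

Lemma mem_wverts_incident X u v p h x :
  walk X u v p -> h \in p -> incident h x -> x \in wverts u p.
Proof.
elim: p u => [|k p IH] u //=; case/and3P=> _ ku wp; rewrite !inE.
case/orP=> [/eqP ->|hp] hx; last by rewrite (IH _ wp hp hx) orbT.
case/incidentP: ku => [[eu eo]|[eu eo]]; case/incidentP: hx => [[ex _]|[ex _]];
  first [by rewrite ex eu eqxx | by rewrite ex -eo mem_wverts_head orbT].
Qed.

Lemma gpath_walk X u v p : gpath X u v p -> walk X u v p.
Proof. by case/andP. Qed.

Lemma gpath_behead X u v h p : gpath X u v (h :: p) -> gpath X (other h u) v p.
Proof. by case/andP=> /= /and3P[_ _ wp] /andP[_ up]; apply/andP. Qed.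

Lemma gpath_nil X u q : gpath X u u q -> q = [::].
Proof.
case: q => [//|h q] /andP[/= /and3P[_ _ /mem_wverts_last uq] /andP[/negP[]]].
exact: uq.
Qed.

Lemma gpath_incident_notin X u v k q h :
  gpath X u v (k :: q) -> incident h u -> h \notin q.
Proof.
case/andP=> /= /and3P[_ _ wq] /andP[uq _] hu; apply: contra uq => hq.
exact: mem_wverts_incident wq hq hu.
Qed.

Lemma sub_gpath X Y u v p : X \subset Y -> gpath X u v p -> gpath Y u v p.
Proof.
move=> sXY /andP[wp up]; rewrite /gpath up andbT; apply: (walk_restrict wp).
by move=> h /(walk_edge_in wp); apply: (subsetP sXY).
Qed.

Lemma gpath_suffix X x v q u :
  gpath X x v q -> u \in wverts x q -> exists p, gpath X u v p.
Proof.
elim: q x => [|h q IH] x /=.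
  by rewrite inE => /andP[/eqP-> _] /eqP->; exists [::]; rewrite /gpath /= eqxx.
move=> gq; rewrite inE => /predU1P[->|]; first by exists (h :: q).
exact/IH/(gpath_behead gq).
Qed.

Lemma reach_gpath X u v : reach X u v -> exists p, gpath X u v p.
Proof.
case=> p; elim: p u => [|h p IH] u /=.
  by move/eqP->; exists [::]; rewrite /gpath /= eqxx.
case/and3P=> hX hu /IH [q gq].
have [uq|uq] := boolP (u \in wverts (other h u) q); first exact: gpath_suffix gq uq.
by exists (h :: q); move: gq; rewrite /gpath /= hX hu uq => /andP[-> ->].
Qed.

Lemma gpath_edge_separates M u v p g :
  acyclic M -> gpath M u v p -> g \in p -> ~ reach (M :\ g) u v.
Proof.
move=> [_ uniq_path] gp gin /reach_gpath [q gq].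
have gq' : gpath M u v q by apply: sub_gpath gq; apply: subsetDl.
move: gin; rewrite (uniq_path _ _ _ _ gp gq') => gq''.
by have := walk_edge_in (gpath_walk gq) gq''; rewrite !inE eqxx.
Qed.

Lemma acyclic_edge_separates M h :
  acyclic M -> h \in M -> ~ reach (M :\ h) (ends h).1 (ends h).2.
Proof.
move=> acM hM; apply: (gpath_edge_separates acM (p := [:: h])); last exact: mem_head.
rewrite /gpath /= hM /Defs.incident /Defs.other eqxx /= eqxx /= !inE andbT.
by case: acM => /(_ h hM).
Qed.

Lemma separating_acyclic X :
  (forall h, h \in X -> ~ reach (X :\ h) (ends h).1 (ends h).2) -> acyclic X.
Proof.
move=> sep; split.
  move=> h hX; apply/negP=> /eqP eh.
  by apply: (sep h hX); rewrite eh; apply: reach_refl.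
move=> u v p; elim: p u => [|h p IH] u q gp gq.
  by move: gp => /andP[/eqP uv _]; move: gq; rewrite uv => /gpath_nil.
case: q gq => [|h' q] gq.
  by move: gq => /andP[/eqP uv _]; move: gp; rewrite uv => /gpath_nil.
have [eqh|h'h] := eqVneq h' h.
  by subst h'; congr (_ :: _); apply: IH (gpath_behead gp) (gpath_behead gq).
have /andP[/= /and3P[hX hu wp] _] := gp.
have hq : h \notin h' :: q.
  by rewrite inE eq_sym (negbTE h'h) (gpath_incident_notin gq hu).
have r1 : reach (X :\ h) u v by exists (h' :: q); apply: walk_setD1 (gpath_walk gq) hq.
have r2 : reach (X :\ h) (other h u) v.
  by exists p; apply: walk_setD1 wp (gpath_incident_notin gp hu).
case: (sep h hX); apply/(reach_other_ends _ hu).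
exact: reach_trans r1 (reach_sym r2).
Qed.

Lemma spanning_forest_exchange X M g e :
  spanning_forest ends X M -> g \in M -> e \in X ->
  ~ reach (M :\ g) (ends e).1 (ends e).2 ->
  spanning_forest ends X (e |: (M :\ g)).
Proof.
move=> [sMX [acM spanM]] gM eX cut.
have rg : reach (e |: (M :\ g)) (ends g).1 (ends g).2.
  have := spanM _ _ (reach_ends eX); rewrite -{1}(setD1K gM).
  by case/reach_setU1_swap.
split; [|split].
- apply/subsetP=> k; rewrite !inE => /predU1P[-> //|/andP[_ /(subsetP sMX)]] //.
- apply: separating_acyclic => h; rewrite !inE => /predU1P[->|/andP[hg hM]] r.
    apply: cut; apply: sub_reach r; apply/subsetP=> k.
    by rewrite !inE => /andP[/negbTE->].
  have sZ : (e |: (M :\ g)) :\ h \subset e |: (M :\ g :\ h).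
    by apply/subsetP=> k; rewrite !inE; case: (k == e); rewrite ?andbT.
  case: (reach_setU1_swap (sub_reach sZ r)) => r'.
    apply: (acyclic_edge_separates acM hM); apply: sub_reach r'.
    by apply/subsetP=> k; rewrite !inE => /and3P[-> _ ->].
  apply: cut; apply: sub_reach r'.
  by apply/subsetP=> k; rewrite !inE => /predU1P[->|/and3P[_ -> //]]; rewrite hg.
- move=> u v /spanM [p wp]; apply: (reach_by_edges wp) => k /(walk_edge_in wp) kM.
  have [->|kg] := eqVneq k g; first exact: rg.
  by apply: reach_ends; rewrite !inE kg kM orbT.
Qed.

End Connectivity.

Section MinimumSpanningForest.

Variables (V E : finType) (ends : E -> V * V) (R : realType) (wt : E -> R).
Implicit Types (X M : {set E}) (e g h : E) (u v : V) (p : seq E) (x y : R).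

Local Notation reach := (reach ends).

Definition light X x : {set E} := [set h in X | wt h <= x].

Lemma light_le X x y : x <= y -> light X x \subset light X y.
Proof.
move=> xy; apply/subsetP=> h; rewrite !inE => /andP[-> hx].
exact: le_trans hx xy.
Qed.

Lemma msf_cut_le X M g e :
  msf ends wt X M -> g \in M -> e \in X ->
  ~ reach (M :\ g) (ends e).1 (ends e).2 -> wt g <= wt e.
Proof.
move=> [sfM minM] gM eX cut.
have [-> //|eg] := eqVneq e g.
have eMg : e \notin M :\ g by apply: contra_notN cut => /(reach_ends ends).
have := minM _ (spanning_forest_exchange sfM gM eX cut).
by rewrite /wsum big_setU1 //= (big_setD1 _ gM) /= lerD2r.
Qed.

Lemma msf_light_cycle X M e :
  msf ends wt X M -> e \in X -> reach (light M (wt e)) (ends e).1 (ends e).2.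
Proof.
move=> msfM eX; have [[_ [acM spanM]] _] := msfM.
have [p gp] := reach_gpath (spanM _ _ (reach_ends ends eX)).
exists p; apply: (walk_restrict (gpath_walk gp)) => g gp'.
have gM := walk_edge_in (gpath_walk gp) gp'.
by rewrite inE gM (msf_cut_le msfM gM eX (gpath_edge_separates acM gp gp')).
Qed.

Lemma msf_path_minimax X M u v p g x :
  msf ends wt X M -> gpath ends M u v p -> g \in p ->
  reach (light X x) u v -> wt g <= x.
Proof.
move=> msfM gp gp' [q wq]; have [[_ [acM _]] _] := msfM.
have [h hq cut] := walk_crosses_cut wq (gpath_edge_separates acM gp gp').
move: (walk_edge_in wq hq); rewrite inE => /andP[hX hx].
by apply: le_trans hx; apply: msf_cut_le msfM (walk_edge_in (gpath_walk gp) gp') hX cut.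
Qed.

End MinimumSpanningForest.

Lemma leq_card_hitting (T : finType) n (A : 'I_n -> {set T}) (F : {set T}) :
  (forall i j, i != j -> [disjoint A i & A j]) ->
  (forall i, exists h, h \in F /\ h \in A i) -> (n <= #|F|)%N.
Proof.
move=> disjA /fin_all_exists [phi phiP].
have phi_inj : injective phi.
  move=> i j eij; apply/eqP; apply: contraT => /disjA /disjointFr/(_ (phiP i).2).
  by rewrite eij (phiP j).2.
rewrite -[n]card_ord -(card_imset _ phi_inj); apply: subset_leq_card.
by apply/subsetP=> _ /imsetP[i _ ->]; case: (phiP i).
Qed.

Section NestedForests.

Variables (V E : finType) (ends : E -> V * V) (Ms : nat -> {set E}).

Lemma Gseq_decr m n : (m <= n)%N -> Gseq Ms n \subset Gseq Ms m.
Proof.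
elim: n => [|n IH]; first by rewrite leqn0 => /eqP->.
rewrite leq_eqVlt => /predU1P[-> //|]; rewrite ltnS => /IH.
by apply: subset_trans; apply: subsetDl.
Qed.

Lemma Gseq_disjoint i j :
  (i < j)%N -> Ms j \subset Gseq Ms j -> [disjoint Ms i & Ms j].
Proof.
move=> lij sj; rewrite disjoint_sym disjoints_subset (subset_trans sj) //.
by rewrite (subset_trans (Gseq_decr lij)) //= setDE subsetIr.
Qed.

Lemma Gseq_notin_bigcup n e i :
  e \notin \bigcup_(j < n) Ms j -> (i <= n)%N -> e \in Gseq Ms i.
Proof.
move=> eMs; elim: i => [|i IH] lein /=; first by rewrite inE.
rewrite inE IH 1?ltnW // andbT; apply: contra eMs => eMi.
by apply/bigcupP; exists (Ordinal lein).
Qed.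

Variables (R : realType) (wt : E -> R) (f : nat).
Hypothesis msfMs : forall i, (i <= f)%N -> msf ends wt (Gseq Ms i) (Ms i).

Lemma msf_union_bottleneck (F : {set E}) e :
  (#|F| <= f)%N -> e \notin F ->
  reach ends (light wt ((\bigcup_(i < f.+1) Ms i) :\: F) (wt e)) (ends e).1 (ends e).2.
Proof.
move=> cardF eF; set H := \bigcup_(i < f.+1) Ms i.
have [eH|eH] := boolP (e \in H); first by apply: reach_ends; rewrite !inE eH eF lexx.
apply: contrapT => cut.
have hitF (i : 'I_f.+1) : exists h, h \in F /\ h \in Ms i.
  have lei : (i <= f)%N by rewrite -ltnS.
  have [p wp] := msf_light_cycle (msfMs lei) (Gseq_notin_bigcup eH (ltnW (ltn_ord i))).
  have [/hasP[h hp hF]|/hasPn noF] := boolP (has (mem F) p).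
    by exists h; move: (walk_edge_in wp hp); rewrite inE => /andP[].
  case: cut; exists p; apply: (walk_restrict wp) => h hp.
  move: (walk_edge_in wp hp); rewrite !inE (noF h hp) => /andP[hMi ->].
  by rewrite andbT; apply/bigcupP; exists i.
have disjMs (i j : 'I_f.+1) : i != j -> [disjoint Ms i & Ms j].
  have sMs (k : 'I_f.+1) : Ms k \subset Gseq Ms k by case: (msfMs (ltn_ord k)) => [[]].
  have [lij|lji|/val_inj->] := ltngtP i j; last by rewrite eqxx.
    by move=> _; apply: Gseq_disjoint.
  by move=> _; rewrite disjoint_sym; apply: Gseq_disjoint.
by have := leq_card_hitting disjMs hitF; rewrite ltnNge cardF.
Qed.

End NestedForests.

Theorem lemma3 (R : realType) (V E : finType) (ends : E -> V * V)
  (w : E -> R) (hw : forall e, 0 < w e) (s : V) (f : nat) (hf : (1 <= f)%N)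
  (T : {set E}) (hT : sp_tree ends w s T)
  (dT : V -> R) (hdT : forall u, reach ends T s u -> is_dist ends w T s u (dT u))
  (Ms : nat -> {set E})
  (hMs : forall i, (i <= f)%N -> msf ends (wmod ends w T dT) (Gseq Ms i) (Ms i))
  (F : {set E}) (hF : (#|F| <= f)%N)
  (t : V) (ht : reach ends (~: F) s t)
  (pi : seq E) (hpi : gpath ends (~: F) s t pi)
  (hpimin : forall q, walk ends (~: F) s t q -> wlen w pi <= wlen w q)
  (M : {set E})
  (hM : msf ends (wmod ends w T dT) ((\bigcup_(i < f.+1) Ms i) :\: F) M)
  (pi' : seq E) (hpi' : gpath ends M s t pi') :
  forall e', e' \in pi' -> new_edge ends T F e' ->
    wmod ends w T dT e' <=
    \big[Num.max/0]_(e <- pi | `[< new_edge ends T F e >]) wmod ends w T dT e.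
Proof.
move=> e' e'pi' _.
set wt := wmod ends w T dT.
set B := \big[Num.max/0]_(e <- pi | _) wt e.
set HF := (\bigcup_(i < f.+1) Ms i) :\: F.
have light_edge h : h \notin F -> wt h <= B -> reach ends (light wt HF B) (ends h).1 (ends h).2.
  by move=> hF' hB; apply: sub_reach (msf_union_bottleneck hMs hF hF'); apply: light_le.
have reach_st : reach ends (light wt HF B) s t.
  have wpi := gpath_walk hpi.
  apply: (reach_by_edges wpi) => h h_pi; move: (walk_edge_in wpi h_pi); rewrite inE => hF'.
  have [hnew|hold] := pselect (new_edge ends T F h).
    by apply: light_edge => //; apply: le_bigmax_seq => //; apply/asboolP.
  have [p wp] : reach ends (T :\: F) (ends h).1 (ends h).2 by apply: contrapT.
  apply: (reach_by_edges wp) => k /(walk_edge_in wp); rewrite inE => /andP[kF kT].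
  by apply: light_edge; rewrite // /wt /wmod kT bigmax_ge_id.
exact: msf_path_minimax hM hpi' e'pi' reach_st.
Qed.
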